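(* Let $f: M\to N$ be a homomorphism of magmas. Then the image $f(M)$ is equidecomposable if and only if $\ker f=\{(x,y)\in M^2 : f(x)=f(y)\}$ is a closed submagma of $M^2$.
   Context: A magma is a set with a binary operation $+$; a homomorphism satisfies $f(x+y)=f(x)+f(y)$. A magma is equidecomposable if $x+y=x'+y'$ implies $x=x'$ and $y=y'$. $M^2=M\times M$ has the componentwise operation $(x,y)+(x',y')=(x+x',y+y')$. A subset $X$ of a magma is closed if $u+v\in X$ implies $u,v\in X$. *)

Definition submagma {T : Type} (op : T -> T -> T) (S : T -> Prop) : Prop :=
  forall u v, S u -> S v -> S (op u v).

Definition closed_subset {T : Type} (op : T -> T -> T) (X : T -> Prop) : Prop :=
  forall u v, X (op u v) -> X u /\ X v.

Definition equidecomposable {T : Type} (op : T -> T -> T) (S : T -> Prop) : Prop :=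
  forall x y x' y', S x -> S y -> S x' -> S y' ->
    op x y = op x' y' -> x = x' /\ y = y'.

Definition is_hom {M N : Type} (opM : M -> M -> M) (opN : N -> N -> N)
  (f : M -> N) : Prop :=
  forall x y, f (opM x y) = opN (f x) (f y).

Definition op2 {M : Type} (op : M -> M -> M) (p q : M * M) : M * M :=
  (op (fst p) (fst q), op (snd p) (snd q)).

Definition image {M N : Type} (f : M -> N) : N -> Prop :=
  fun n => exists x, f x = n.

Definition kernel {M N : Type} (f : M -> N) : M * M -> Prop :=
  fun p => f (fst p) = f (snd p).


Set Implicit Arguments.

(* The kernel of a homomorphism is always a submagma; closedness of the
   kernel at (x, x') and (y, y') says exactly that f x + f y = f x' + f y'
   forces f x = f x' and f y = f y', i.e. equidecomposability of f(M). *)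

Section KernelOfHom.

Variables (M N : Type) (opM : M -> M -> M) (opN : N -> N -> N) (f : M -> N).
Hypothesis hf : is_hom opM opN f.

Lemma kernel_submagma : submagma (op2 opM) (kernel f).
Proof.
  intros [u1 u2] [v1 v2]; unfold kernel, op2; simpl; intros Hu Hv.
  rewrite !hf, Hu, Hv; reflexivity.
Qed.

Lemma kernel_closed_of_equidecomposable_image :
  equidecomposable opN (image f) -> closed_subset (op2 opM) (kernel f).
Proof.
  intros E [u1 u2] [v1 v2]; unfold kernel, op2; simpl; intros H.
  rewrite !hf in H.
  apply E in H; [exact H | eexists; reflexivity ..].
Qed.

Lemma equidecomposable_image_of_kernel_closed :
  closed_subset (op2 opM) (kernel f) -> equidecomposable opN (image f).
Proof.
  intros C a b a' b' [x <-] [y <-] [x' <-] [y' <-] H.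
  rewrite <- !hf in H.
  exact (C (x, x') (y, y') H).
Qed.

End KernelOfHom.

Theorem lemma6p3 (M N : Type) (opM : M -> M -> M) (opN : N -> N -> N)
  (f : M -> N) (hf : is_hom opM opN f) :
  equidecomposable opN (image f) <->
  (submagma (op2 opM) (kernel f) /\ closed_subset (op2 opM) (kernel f)).
Proof.
  split.
  - intros E; split.
    + exact (kernel_submagma hf).
    + exact (kernel_closed_of_equidecomposable_image hf E).
  - intros [_ C]; exact (equidecomposable_image_of_kernel_closed hf C).
Qed.
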